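(* A locally generated Lie superalgebra $G$ is minimal if and only if it is $(-2,2)$-transitive. In particular, every locally generated $(0,0)$-transitive Lie superalgebra is minimal.
   Context: All vector spaces are over $\mathbb{K}=\mathbb{R}$ or $\mathbb{C}$ and are $\mathbb{Z}$-graded; parity is degree mod 2; morphisms preserve degree. A Lie superalgebra is a graded space with degree-preserving bracket satisfying graded antisymmetry and graded Jacobi. $G_{\pm}=\bigoplus_{k\geq1}G_{\pm k}$, $G_{m-}=\bigoplus_{k\le m}G_k$, $G_{n+}=\bigoplus_{k\ge n}G_k$. The local part $G^{\mathrm{loc}}$ is $G_{-1}\oplus G_0\oplus G_1$ with restricted bracket (a local Lie superalgebra: brackets $G_i\otimes G_j\to G_{i+j}$ only for $i+j\in\{-1,0,1\}$); $G$ is locally generated if generated by $G^{\mathrm{loc}}$. A locally generated $G$ is minimal if for every locally generated Lie superalgebra $H$ every isomorphism of local Lie superalgebras $H^{\mathrm{loc}}\to G^{\mathrm{loc}}$ extends to a Lie superalgebra morphism $H\to G$. $G$ is negatively $n$-transitive if for $x\in G_{n+}$, $[G_-,x]=0$ implies $x=0$; positively $m$-transitive if for $x\in G_{m-}$, $[G_+,x]=0$ implies $x=0$; $(m,n)$-transitive if both. *)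

(* Z-graded Lie superalgebras over a characteristic-0 field K
   (K : numFieldType, which covers K = R and K = C). *)
From mathcomp Require Import all_boot all_order all_algebra.
Set Implicit Arguments. Unset Strict Implicit. Unset Printing Implicit Defensive.
Import Order.TTheory GRing.Theory Num.Theory.
Local Open Scope ring_scope.

Definition ksign (K : numFieldType) (i j : int) : K :=
  (-1) ^+ (odd (absz i) && odd (absz j)).

(* A Z-graded Lie superalgebra structure on the K-vector space V:
   V = (+)_{k in Z} G_k (G_k = [deg k]), with a bilinear, degree-preserving
   bracket satisfying graded antisymmetry and graded Jacobi. *)
Record LieSA (K : numFieldType) (V : lmodType K) := {
  deg : int -> V -> Prop;
  deg0 : forall k, deg k 0;
  degD : forall k (a : K) x y, deg k x -> deg k y -> deg k (a *: x + y);
  deg_span : forall v : V, exists (s : seq int) (c : int -> V),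
      (forall k, deg k (c k)) /\ v = \sum_(k <- s) c k;
  deg_indep : forall (s : seq int) (c : int -> V), uniq s ->
      (forall k, k \in s -> deg k (c k)) -> \sum_(k <- s) c k = 0 ->
      forall k, k \in s -> c k = 0;
  br : V -> V -> V;
  brDl : forall (a : K) x y z, br (a *: x + y) z = a *: br x z + br y z;
  brDr : forall (a : K) x y z, br z (a *: x + y) = a *: br z x + br z y;
  br_deg : forall i j x y, deg i x -> deg j y -> deg (i + j) (br x y);
  br_anti : forall i j x y, deg i x -> deg j y ->
      br x y = - (ksign K i j *: br y x);
  br_jacobi : forall i j x y z, deg i x -> deg j y ->
      br x (br y z) = br (br x y) z + ksign K i j *: br y (br x z)
}.

Section Defs.
Variables (K : numFieldType) (V : lmodType K) (G : LieSA V).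

Definition in_graded_span (P : int -> bool) (x : V) : Prop :=
  exists (s : seq int) (c : int -> V),
    (forall k, k \in s -> P k) /\ (forall k, deg G k (c k)) /\
    x = \sum_(k <- s) c k.

Definition local_hom (x : V) : Prop := deg G (-1) x \/ deg G 0 x \/ deg G 1 x.

Inductive generated (P : V -> Prop) : V -> Prop :=
  | gen_base x : P x -> generated P x
  | gen_zero : generated P 0
  | gen_lin (a : K) x y : generated P x -> generated P y ->
      generated P (a *: x + y)
  | gen_br x y : generated P x -> generated P y -> generated P (br G x y).

Definition locally_generated : Prop := forall v, generated local_hom v.

Definition neg_transitive (n : int) : Prop :=
  forall x, in_graded_span (fun k => n <= k) x ->
    (forall k y, 1 <= k -> deg G (- k) y -> br G y x = 0) -> x = 0.

Definition pos_transitive (m : int) : Prop :=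
  forall x, in_graded_span (fun k => k <= m) x ->
    (forall k y, 1 <= k -> deg G k y -> br G y x = 0) -> x = 0.

Definition mn_transitive (m n : int) : Prop := pos_transitive m /\ neg_transitive n.

End Defs.

Definition is_local_deg (k : int) : bool := (k == -1) || (k == 0) || (k == 1).

(* f : H^loc -> G^loc is an isomorphism of local Lie superalgebras
   (f is only relevant on the homogeneous components of degree -1, 0, 1). *)
Definition local_iso (K : numFieldType) (W V : lmodType K)
    (H : LieSA W) (G : LieSA V) (f : W -> V) : Prop :=
  (forall k, is_local_deg k -> forall x, deg H k x -> deg G k (f x)) /\
  (forall k, is_local_deg k -> forall (a : K) x y, deg H k x -> deg H k y ->
      f (a *: x + y) = a *: f x + f y) /\
  (forall k, is_local_deg k -> forall x y, deg H k x -> deg H k y ->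
      f x = f y -> x = y) /\
  (forall k, is_local_deg k -> forall y, deg G k y ->
      exists2 x, deg H k x & f x = y) /\
  (forall i j, is_local_deg i -> is_local_deg j -> is_local_deg (i + j) ->
      forall x y, deg H i x -> deg H j y -> f (br H x y) = br G (f x) (f y)).

Definition lie_morphism (K : numFieldType) (W V : lmodType K)
    (H : LieSA W) (G : LieSA V) (g : W -> V) : Prop :=
  (forall (a : K) x y, g (a *: x + y) = a *: g x + g y) /\
  (forall k x, deg H k x -> deg G k (g x)) /\
  (forall x y, g (br H x y) = br G (g x) (g y)).

Definition minimal (K : numFieldType) (V : lmodType K) (G : LieSA V) : Prop :=
  locally_generated G /\
  forall (W : lmodType K) (H : LieSA W), locally_generated H ->
    forall f : W -> V, local_iso H G f ->
    exists g : W -> V, lie_morphism H G g /\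
      (forall x, local_hom H x -> g x = f x).

(* If f : H^loc -> G^loc is a local isomorphism, the subalgebra of H x G generated
   by the graph of f on the local part projects onto H and onto G, and its kernel
   {y | (0, y) in it} is a graded ideal of G with zero local part.  Every locally
   generated algebra is spanned by G_0 and the iterated brackets of G_1, resp. of
   G_-1; hence G_-1 generates G_- and G_1 generates G_+, and (-2, 2)-transitivity
   kills such an ideal degree by degree, so the subalgebra is the graph of the
   required extension.  Conversely, the ideal generated by the elements y of degree
   >= 2 with [G_-, y] = 0 (or of degree <= -2 with [G_+, y] = 0) has zero local part;
   minimality, applied to the quotient of G by this ideal, makes it vanish, and
   that is (-2, 2)-transitivity. *)

From HB Require Import structures.
From mathcomp Require Import all_boot all_order all_algebra generic_quotient zify.
From Stdlib Require Import ClassicalEpsilon.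
Set Implicit Arguments. Unset Strict Implicit. Unset Printing Implicit Defensive.
Import Order.TTheory GRing.Theory Num.Theory.
Local Open Scope ring_scope.

Section BracketCalculus.
Variables (K : numFieldType) (V : lmodType K) (G : LieSA V).

Lemma br_addl x y z : br G (x + y) z = br G x z + br G y z.
Proof. by have := brDl G 1 x y z; rewrite !scale1r. Qed.

Lemma br_addr x y z : br G z (x + y) = br G z x + br G z y.
Proof. by have := brDr G 1 x y z; rewrite !scale1r. Qed.

Lemma br0l z : br G 0 z = 0.
Proof. by apply/(addrI (br G 0 z)); rewrite -br_addl !addr0. Qed.

Lemma br0r z : br G z 0 = 0.
Proof. by apply/(addrI (br G z 0)); rewrite -br_addr !addr0. Qed.

Lemma brZl a x z : br G (a *: x) z = a *: br G x z.
Proof. by have := brDl G a x 0 z; rewrite !addr0 br0l addr0. Qed.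

Lemma brZr a x z : br G z (a *: x) = a *: br G z x.
Proof. by have := brDr G a x 0 z; rewrite !addr0 br0r addr0. Qed.

Lemma brNl x z : br G (- x) z = - br G x z.
Proof. by rewrite -scaleN1r brZl scaleN1r. Qed.

Lemma brNr x z : br G z (- x) = - br G z x.
Proof. by rewrite -scaleN1r brZr scaleN1r. Qed.

Lemma brBl x y z : br G (x - y) z = br G x z - br G y z.
Proof. by rewrite br_addl brNl. Qed.

Lemma brBr x y z : br G z (x - y) = br G z x - br G z y.
Proof. by rewrite br_addr brNr. Qed.

Lemma br_suml (I : Type) (r : seq I) (P : pred I) (F : I -> V) z :
  br G (\sum_(i <- r | P i) F i) z = \sum_(i <- r | P i) br G (F i) z.
Proof. by apply: (big_morph (br G^~ z)); [move=> *; exact: br_addl | exact: br0l]. Qed.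

Lemma br_sumr (I : Type) (r : seq I) (P : pred I) (F : I -> V) z :
  br G z (\sum_(i <- r | P i) F i) = \sum_(i <- r | P i) br G z (F i).
Proof. by apply: (big_morph (br G z)); [move=> *; exact: br_addr | exact: br0r]. Qed.

Lemma deg_add k x y : deg G k x -> deg G k y -> deg G k (x + y).
Proof. by move=> hx hy; have := degD 1 hx hy; rewrite scale1r. Qed.

Lemma degZ k a x : deg G k x -> deg G k (a *: x).
Proof. by move=> hx; have := degD a hx (deg0 G k); rewrite addr0. Qed.

Lemma degN k x : deg G k x -> deg G k (- x).
Proof. by rewrite -scaleN1r; apply: degZ. Qed.

Lemma deg_sum k (I : Type) (r : seq I) (P : pred I) (F : I -> V) :
  (forall i, P i -> deg G k (F i)) -> deg G k (\sum_(i <- r | P i) F i).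
Proof. by move=> hF; apply: big_ind => //; [exact: deg0 | exact: deg_add]. Qed.

End BracketCalculus.

Section Span.
Variables (K : numFieldType) (V : lmodType K).

Inductive span (S : V -> Prop) : V -> Prop :=
  | span0 : span S 0
  | span_gen x : S x -> span S x
  | span_lin (a : K) x y : span S x -> span S y -> span S (a *: x + y).

Lemma span_min (S T : V -> Prop) x : T 0 ->
  (forall a y z, T y -> T z -> T (a *: y + z)) -> (forall y, S y -> T y) ->
  span S x -> T x.
Proof. by move=> T0 Tlin ST; elim=> [|y /ST|a y z _ Ty _ Tz]; last exact: Tlin. Qed.

Lemma span_mono (S T : V -> Prop) x : (forall y, S y -> T y) -> span S x -> span T x.
Proof.
by move=> ST; apply: span_min => [|*|y /ST]; [exact: span0 | exact: span_lin | exact: span_gen].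
Qed.

Lemma spanD S x y : span S x -> span S y -> span S (x + y).
Proof. by move=> hx hy; have := span_lin 1 hx hy; rewrite scale1r. Qed.

Lemma spanZ S a x : span S x -> span S (a *: x).
Proof. by move=> hx; have := span_lin a hx (span0 S); rewrite addr0. Qed.

Lemma spanN S x : span S x -> span S (- x).
Proof. by rewrite -scaleN1r; apply: spanZ. Qed.

Lemma spanB S x y : span S x -> span S y -> span S (x - y).
Proof. by move=> hx hy; apply/spanD/spanN. Qed.

Lemma span_sum S (I : Type) (r : seq I) (P : pred I) (F : I -> V) :
  (forall i, P i -> span S (F i)) -> span S (\sum_(i <- r | P i) F i).
Proof. by move=> hF; apply: big_ind => //; [exact: span0 | exact: spanD]. Qed.

Lemma span_br (G : LieSA V) (S T R : V -> Prop) x y :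
    (forall a b, S a -> T b -> span R (br G a b)) ->
  span S x -> span T y -> span R (br G x y).
Proof.
move=> hST hx hy; elim: hx => [|a Sa|c a a' _ IHa _ IHa'].
- by rewrite br0l; exact: span0.
- elim: hy => [|b Tb|c b b' _ IHb _ IHb'].
  + by rewrite br0r; exact: span0.
  + exact: hST.
  + by rewrite brDr; exact: span_lin.
- by rewrite brDl; exact: span_lin.
Qed.
End Span.

Section HomogeneousComponents.
Variables (K : numFieldType) (V : lmodType K).

Definition hcomp (s : seq (int * V)) (k : int) : V := \sum_(p <- s | p.1 == k) p.2.

Lemma sum_pred1_uniq (T : eqType) (t : seq T) (F : T -> V) k :
  uniq t -> k \in t -> \sum_(j <- t | j == k) F j = F k.
Proof.
move=> ut kt; rewrite (big_rem k) //= eqxx big1_seq ?addr0 // => j /andP[/eqP -> ].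
by rewrite mem_rem_uniqF.
Qed.

Lemma sum_hcomp s (t : seq int) : uniq t -> {subset map fst s <= t} ->
  \sum_(k <- t) hcomp s k = \sum_(p <- s) p.2.
Proof.
move=> ut st; rewrite /hcomp; under eq_bigr do rewrite big_mkcond /=.
rewrite exchange_big /= big_seq [RHS]big_seq; apply: eq_bigr => p ps.
rewrite -big_mkcond /= (eq_bigl (fun k => k == p.1)) => [|k]; last exact: eq_sym.
by rewrite (sum_pred1_uniq (fun=> p.2)) //; apply/st/map_f.
Qed.

Lemma hcomp_ind (S : V -> Prop) s : S 0 -> (forall x y, S x -> S y -> S (x + y)) ->
  (forall k, S (hcomp s k)) -> S (\sum_(p <- s) p.2).
Proof.
move=> S0 SD Shc; rewrite -(@sum_hcomp s (undup (map fst s))) ?undup_uniq //.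
  exact: big_ind.
by move=> k; rewrite mem_undup.
Qed.

Variable G : LieSA V.

Definition graded_seq (s : seq (int * V)) := forall p, p \in s -> deg G p.1 p.2.

Lemma hcomp_deg s k : graded_seq s -> deg G k (hcomp s k).
Proof. by move=> hs; rewrite /hcomp big_seq_cond; apply: deg_sum => p /andP[/hs + /eqP <-]. Qed.

Lemma hcomp_eq0 s : graded_seq s -> \sum_(p <- s) p.2 = 0 -> forall k, hcomp s k = 0.
Proof.
move=> hs s0 k; have ut := undup_uniq (k :: map fst s).
apply: (deg_indep ut) => [j _||]; first exact: hcomp_deg.
  by rewrite sum_hcomp // => j jin; rewrite mem_undup in_cons jin orbT.
by rewrite mem_undup mem_head.
Qed.

Lemma hcomp_homog s e z : graded_seq s -> deg G e z -> z = \sum_(p <- s) p.2 ->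
  forall k, hcomp s k = if k == e then z else 0.
Proof.
move=> hs hz zs k.
have hs' : graded_seq ((e, - z) :: s).
  by move=> p; rewrite in_cons => /orP[/eqP -> /=|/hs //]; exact: degN.
have := hcomp_eq0 hs' _ k; rewrite big_cons /= -zs addNr /hcomp big_cons /= => /(_ erefl).
by rewrite eq_sym; case: eqP => [_ /eqP|//]; rewrite addrC subr_eq0 => /eqP.
Qed.
End HomogeneousComponents.

Section ProductLieSA.
Variables (K : numFieldType) (W V : lmodType K) (H : LieSA W) (G : LieSA V).

Definition prod_deg k (p : W * V) := deg H k p.1 /\ deg G k p.2.
Definition prod_br (p q : W * V) : W * V := (br H p.1 q.1, br G p.2 q.2).

Lemma fst_sum (I : Type) (r : seq I) (P : pred I) (F : I -> W * V) :
  (\sum_(i <- r | P i) F i).1 = \sum_(i <- r | P i) (F i).1.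
Proof. exact: (big_morph fst). Qed.

Lemma snd_sum (I : Type) (r : seq I) (P : pred I) (F : I -> W * V) :
  (\sum_(i <- r | P i) F i).2 = \sum_(i <- r | P i) (F i).2.
Proof. exact: (big_morph snd). Qed.

Lemma prod_deg_span (p : W * V) : exists (s : seq int) (c : int -> W * V),
  (forall k, prod_deg k (c k)) /\ p = \sum_(k <- s) c k.
Proof.
case: p => w v; have [s1 [c1 [h1 ->]]] := deg_span H w.
have [s2 [c2 [h2 ->]]] := deg_span G v.
pose t1 := [seq (k, c1 k) | k <- s1]; pose t2 := [seq (k, c2 k) | k <- s2].
exists (undup (s1 ++ s2)), (fun k => (hcomp t1 k, hcomp t2 k)); split.
  by move=> k; split; apply: hcomp_deg => p /mapP[j _ ->].
have sub1 : {subset map fst t1 <= undup (s1 ++ s2)}.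
  by move=> k; rewrite -map_comp map_id mem_undup mem_cat => ->.
have sub2 : {subset map fst t2 <= undup (s1 ++ s2)}.
  by move=> k; rewrite -map_comp map_id mem_undup mem_cat orbC => ->.
rewrite [RHS]surjective_pairing fst_sum snd_sum /=.
by rewrite !sum_hcomp ?undup_uniq // !big_map.
Qed.

Lemma prod_deg_indep (s : seq int) (c : int -> W * V) : uniq s ->
  (forall k, k \in s -> prod_deg k (c k)) -> \sum_(k <- s) c k = 0 ->
  forall k, k \in s -> c k = 0.
Proof.
move=> us hc s0 k ks.
have := deg_indep (c := fun k => (c k).1) us (fun k ks => (hc k ks).1).
have := deg_indep (c := fun k => (c k).2) us (fun k ks => (hc k ks).2).
rewrite -fst_sum -snd_sum s0 => /(_ erefl k ks) e2 /(_ erefl k ks) e1.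
by rewrite [c k]surjective_pairing e1 e2.
Qed.

Lemma hcomp_pair (s : seq (int * (W * V))) k :
  hcomp s k = (hcomp [seq (p.1, p.2.1) | p <- s] k, hcomp [seq (p.1, p.2.2) | p <- s] k).
Proof. by rewrite /hcomp [LHS]surjective_pairing fst_sum snd_sum !big_map. Qed.

Definition prodLieSA : LieSA (W * V)%type.
Proof.
refine (@Build_LieSA _ _ prod_deg _ _ prod_deg_span prod_deg_indep prod_br _ _ _ _ _).
- by move=> k; split; exact: deg0.
- by move=> k a x y [hx1 hx2] [hy1 hy2]; split; exact: degD.
- by move=> a x y z; rewrite /prod_br /= !brDl.
- by move=> a x y z; rewrite /prod_br /= !brDr.
- by move=> i j x y [hx1 hx2] [hy1 hy2]; split; exact: br_deg.
- by move=> i j x y [hx1 hx2] [hy1 hy2]; rewrite /prod_br (br_anti hx1 hy1) (br_anti hx2 hy2).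
- move=> i j x y z [hx1 hx2] [hy1 hy2].
  by rewrite /prod_br /= (br_jacobi _ hx1 hy1) (br_jacobi _ hx2 hy2).
Defined.
End ProductLieSA.

Lemma ksign0 (K : numFieldType) j : ksign K 0 j = 1.
Proof. by rewrite /ksign expr0. Qed.

Section LocalGeneration.
Variables (K : numFieldType) (V : lmodType K) (G : LieSA V) (loc : int -> V -> Prop).
Hypothesis loc_deg : forall k x, is_local_deg k -> loc k x -> deg G k x.
Hypothesis loc_br : forall i j x y, is_local_deg i -> is_local_deg j ->
  is_local_deg (i + j) -> loc i x -> loc j y -> loc (i + j) (br G x y).

Definition loc_hom x := loc (-1) x \/ loc 0 x \/ loc 1 x.

Definition sdeg (s : bool) : int := if s then 1 else -1.

Inductive monomial (s : bool) : int -> V -> Prop :=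
  | monomial_gen x : loc (sdeg s) x -> monomial s (sdeg s) x
  | monomial_br d1 d2 x y : monomial s d1 x -> monomial s d2 y ->
      monomial s (d1 + d2) (br G x y).

Let loc_sdeg s x : loc (sdeg s) x -> deg G (sdeg s) x.
Proof. by case: s; apply: loc_deg. Qed.

Let loc0 x : loc 0 x -> deg G 0 x.
Proof. exact: loc_deg. Qed.

Let loc0_br s a b : loc 0 a -> loc (sdeg s) b -> loc (sdeg s) (br G a b).
Proof.
by case: s => ha hb; [have := @loc_br 0 1 a b | have := @loc_br 0 (-1) a b];
  rewrite add0r; apply.
Qed.

Let loc00_br a b : loc 0 a -> loc 0 b -> loc 0 (br G a b).
Proof. by move=> ha hb; have := @loc_br 0 0 a b; rewrite add0r; apply. Qed.

Let loc_opp_br s a b : loc (sdeg (~~ s)) a -> loc (sdeg s) b -> loc 0 (br G a b).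
Proof.
by case: s => ha hb; [have := @loc_br (-1) 1 a b | have := @loc_br 1 (-1) a b];
  rewrite ?addNr ?addrN; apply.
Qed.

Lemma monomial_deg s d x : monomial s d x -> deg G d x.
Proof. by elim=> [y /loc_sdeg // | *]; exact: br_deg. Qed.

Lemma monomial_sign s d x : monomial s d x -> if s then 1 <= d else d <= -1.
Proof. by elim; case: s => //= *; lia. Qed.

Lemma monomial_local s d x : monomial s d x -> is_local_deg d -> d = sdeg s /\ loc d x.
Proof.
case=> [y hy _ //| d1 d2 x1 x2 h1 h2].
move: (monomial_sign h1) (monomial_sign h2); rewrite /is_local_deg.
by case: s h1 h2 => /= _ _; lia.
Qed.

Lemma br0_monomial s d a b : loc 0 a -> monomial s d b -> span (monomial s d) (br G a b).
Proof.
move=> ha; elim=> [y hy | d1 d2 x y hx IHx hy IHy].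
  by apply/span_gen/monomial_gen; exact: loc0_br.
rewrite (br_jacobi _ (loc0 ha) (monomial_deg hx)) ksign0 scale1r.
have hbr p q : monomial s d1 p -> monomial s d2 q -> span (monomial s (d1 + d2)) (br G p q).
  by move=> hp hq; apply/span_gen/monomial_br.
by apply: spanD; [exact: span_br hbr IHx (span_gen hy) | exact: span_br hbr (span_gen hx) IHy].
Qed.

Lemma monomial_br0 s d a b : loc 0 a -> monomial s d b -> span (monomial s d) (br G b a).
Proof.
move=> ha hb; rewrite (br_anti (monomial_deg hb) (loc0 ha)).
by apply/spanN/spanZ; exact: br0_monomial.
Qed.

Definition borel s d x := monomial s d x \/ (d = 0 /\ loc 0 x).

Lemma borel_br s i j a b : borel s i a -> borel s j b -> span (borel s (i + j)) (br G a b).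
Proof.
case=> [ha|[-> ha]] [hb|[-> hb]].
- by apply/span_gen; left; exact: monomial_br.
- by rewrite addr0; apply: (span_mono (S := monomial s i)); [left | exact: monomial_br0].
- by rewrite add0r; apply: (span_mono (S := monomial s j)); [left | exact: br0_monomial].
- by apply/span_gen; right; split => //; exact: loc00_br.
Qed.

Lemma opp_gen_br_monomial s d a b : loc (sdeg (~~ s)) a -> monomial s d b ->
  span (borel s (sdeg (~~ s) + d)) (br G a b).
Proof.
have bbr i j x y :
    span (borel s i) x -> span (borel s j) y -> span (borel s (i + j)) (br G x y).
  by apply: span_br => *; exact: borel_br.
move=> ha; elim=> [y hy | d1 d2 x y hx IHx hy IHy].
  have -> : sdeg (~~ s) + sdeg s = 0 by case: s {bbr ha hy}.
  by apply/span_gen; right; split => //; exact: loc_opp_br ha hy.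
rewrite (br_jacobi _ (loc_sdeg ha) (monomial_deg hx)); apply: spanD.
  by rewrite addrA; apply: bbr IHx _; apply/span_gen; left.
by apply: spanZ; rewrite addrCA; apply: bbr IHy; apply/span_gen; left.
Qed.

(* The pieces span the subalgebra generated by [loc]: G = N_- + G_0 + N_+. *)
Definition piece d x := monomial true d x \/ monomial false d x \/ (d = 0 /\ loc 0 x).

Lemma monomial_piece s d x : monomial s d x -> piece d x.
Proof. by case: s => h; [left | right; left]. Qed.

Lemma borel_piece s d x : borel s d x -> piece d x.
Proof. by case=> [/monomial_piece // | h]; right; right. Qed.

Lemma piece_cases s d x : piece d x ->
  monomial s d x \/ monomial (~~ s) d x \/ (d = 0 /\ loc 0 x).
Proof. by case: s; rewrite /piece; tauto. Qed.

Lemma monomial_br_opp s i j a b : monomial (~~ s) i a -> monomial s j b ->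
  span (piece (i + j)) (br G a b).
Proof.
move=> ha; elim: ha j b => [x hx | i1 i2 a1 a2 h1 IH1 h2 IH2] j b hb.
  by apply: (span_mono (@borel_piece s _)); exact: opp_gen_br_monomial.
have br_piece i0 a0 : monomial (~~ s) i0 a0 ->
    (forall j b, monomial s j b -> span (piece (i0 + j)) (br G a0 b)) ->
    forall k c, span (piece k) c -> span (piece (i0 + k)) (br G a0 c).
  move=> h0 IH0 k c hc; apply: (span_br _ (@span_gen _ _ (eq a0) a0 erefl) hc).
  move=> p q <- /(piece_cases s) [hq|[hq|[-> hq]]].
  - exact: IH0.
  - by apply/span_gen/(monomial_piece (monomial_br h0 hq)).
  - by rewrite addr0; apply: (span_mono (@monomial_piece (~~ s) _)); exact: monomial_br0 hq h0.
have -> : br G (br G a1 a2) b =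
    br G a1 (br G a2 b) - ksign K i1 i2 *: br G a2 (br G a1 b).
  by rewrite (br_jacobi b (monomial_deg h1) (monomial_deg h2)) addrK.
apply: spanB; first by rewrite -addrA; apply: br_piece => //; exact: IH2.
by apply: spanZ; rewrite -addrA addrCA; apply: br_piece => //; exact: IH1.
Qed.

Lemma piece_br i j a b : piece i a -> piece j b -> span (piece (i + j)) (br G a b).
Proof.
have mp s d x : span (monomial s d) x -> span (piece d) x.
  exact: span_mono (@monomial_piece s d).
case=> [ha|[ha|[-> ha]]] [hb|[hb|[-> hb]]].
- exact/span_gen/(monomial_piece (monomial_br ha hb)).
- exact: (@monomial_br_opp false).
- by rewrite addr0; apply/mp/(monomial_br0 hb ha).
- exact: (@monomial_br_opp true).
- exact/span_gen/(monomial_piece (monomial_br ha hb)).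
- by rewrite addr0; apply/mp/(monomial_br0 hb ha).
- by rewrite add0r; apply/mp/(br0_monomial ha hb).
- by rewrite add0r; apply/mp/(br0_monomial ha hb).
- by apply/span_gen; right; right; split => //; exact: loc00_br.
Qed.

Lemma piece_deg d x : span (piece d) x -> deg G d x.
Proof.
apply: span_min => [|*|y [/monomial_deg|[/monomial_deg|[-> /loc0]]] //].
  exact: deg0.
exact: degD.
Qed.

Lemma piece_generated d x : span (piece d) x -> generated G loc_hom x.
Proof.
have mgen s e y : monomial s e y -> generated G loc_hom y.
  elim=> [z hz | *]; last exact: gen_br.
  by apply: gen_base; case: s hz => hz; rewrite /loc_hom; tauto.
apply: span_min => [|*|y [/mgen|[/mgen|[_ hy]]] //]; [exact: gen_zero | exact: gen_lin |].
by apply: gen_base; rewrite /loc_hom; tauto.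
Qed.

Lemma generated_pieces z : generated G loc_hom z -> exists s : seq (int * V),
  (forall p, p \in s -> span (piece p.1) p.2) /\ z = \sum_(p <- s) p.2.
Proof.
have one d x : piece d x -> exists s : seq (int * V),
    (forall p, p \in s -> span (piece p.1) p.2) /\ x = \sum_(p <- s) p.2.
  move=> hx; exists [:: (d, x)]; rewrite big_seq1; split => // p.
  by rewrite mem_seq1 => /eqP -> /=; exact: span_gen.
elim=> [x [hx|[hx|hx]] | | a x y _ [s1 [h1 ->]] _ [s2 [h2 ->]]
       | x y _ [s1 [h1 ->]] _ [s2 [h2 ->]]].
- by apply: (one (-1)); right; left; exact: (@monomial_gen false).
- by apply: (one 0); right; right.
- by apply: (one 1); left; exact: (@monomial_gen true).
- by exists [::]; rewrite big_nil.
- exists ([seq (p.1, a *: p.2) | p <- s1] ++ s2); split.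
    by move=> p; rewrite mem_cat => /orP[/mapP[q /h1 hq ->]|/h2] //; exact: spanZ.
  by rewrite big_cat big_map /= scaler_sumr.
- exists [seq (p.1 + q.1, br G p.2 q.2) | p <- s1, q <- s2]; split.
    move=> p /allpairsP [[p1 q1] [/= /h1 hp /h2 hq ->]] /=.
    by apply: span_br hp hq => *; exact: piece_br.
  by rewrite big_allpairs_dep br_suml; apply: eq_bigr => p _; rewrite br_sumr.
Qed.

Lemma generated_graded z : generated G loc_hom z -> exists s : seq (int * V),
  (forall p, p \in s -> deg G p.1 p.2 /\ generated G loc_hom p.2) /\ z = \sum_(p <- s) p.2.
Proof.
case/generated_pieces=> s [hs ->]; exists s; split => // p /hs hp.
by split; [exact: piece_deg hp | exact: piece_generated hp].
Qed.

Lemma generated_homog z e : generated G loc_hom z -> deg G e z -> span (piece e) z.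
Proof.
case/generated_pieces=> s [hs zs] hz.
have gs : graded_seq G s by move=> p /hs /piece_deg.
have := hcomp_homog gs hz zs e; rewrite eqxx => <-.
by rewrite /hcomp big_seq_cond; apply: span_sum => p /andP[/hs + /eqP <-].
Qed.

Lemma generated_local z k : is_local_deg k -> loc k 0 ->
    (forall a x y, loc k x -> loc k y -> loc k (a *: x + y)) ->
  generated G loc_hom z -> deg G k z -> loc k z.
Proof.
move=> hk lk0 lklin hz /(generated_homog hz); apply: span_min => // y.
by case=> [hy|[hy|[-> //]]]; have [_] := monomial_local hy hk.
Qed.

Lemma generated_sign s z e : (if s then 1 <= e else e <= -1) ->
  generated G loc_hom z -> deg G e z -> span (monomial s e) z.
Proof.
move=> he hz /(generated_homog hz); apply: span_mono => y /(piece_cases s).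
case=> [//|[/monomial_sign|[ee _]]]; last by move: he; rewrite ee; case: s.
by case: s he => /=; lia.
Qed.
End LocalGeneration.

Section LocallyGenerated.
Variables (K : numFieldType) (V : lmodType K) (G : LieSA V).
Hypothesis hG : locally_generated G.

Let deg_local k x : is_local_deg k -> deg G k x -> deg G k x. Proof. by []. Qed.

Let deg_br i j x y : is_local_deg i -> is_local_deg j -> is_local_deg (i + j) ->
  deg G i x -> deg G j y -> deg G (i + j) (br G x y).
Proof. by move=> *; exact: br_deg. Qed.

Lemma br_eq0_sign s y : (forall z, deg G (sdeg s) z -> br G z y = 0) ->
  forall e z, (if s then 1 <= e else e <= -1) -> deg G e z -> br G z y = 0.
Proof.
move=> y0 e z he hz.
have := generated_sign deg_local deg_br he (hG z) hz.
apply: (span_min (T := fun w => br G w y = 0)) => [|a x1 x2 h1 h2|w]; first exact: br0l.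
  by rewrite brDl h1 h2 scaler0 addr0.
elim=> [x /y0 // | d1 d2 x1 x2 h1 IH1 h2 IH2].
have -> : br G (br G x1 x2) y = br G x1 (br G x2 y) - ksign K d1 d2 *: br G x2 (br G x1 y).
  by rewrite (br_jacobi y (monomial_deg deg_local h1) (monomial_deg deg_local h2)) addrK.
by rewrite IH1 IH2 !br0r scaler0 subr0.
Qed.

Lemma in_graded_span_homog (P : int -> bool) d y : deg G d y -> P d ->
  in_graded_span G P y.
Proof.
move=> hy Pd; exists [:: d], (fun k => if k == d then y else 0); rewrite big_seq1 eqxx.
split=> [k|]; first by rewrite mem_seq1 => /eqP ->.
by split=> // k; case: eqP => [->|_]; [|exact: deg0].
Qed.

(* G_-1 generates G_- and G_1 generates G_+ (br_eq0_sign), so it suffices that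
   G_-1 (for d >= 2), resp. G_1 (for d <= -2), kills y. *)
Lemma homog_eq0_of_transitive d y : mn_transitive G (-2) 2 -> deg G d y ->
  ~~ is_local_deg d -> (forall z, deg G (sdeg (d < 0)) z -> br G z y = 0) -> y = 0.
Proof.
move=> [tp tn] hy; rewrite /is_local_deg => dnl y0.
have := br_eq0_sign y0; case: ltP => dlt kill.
  apply: tp; first by apply: (in_graded_span_homog hy); lia.
  by move=> k z hk hz; exact: (kill k).
apply: tn; first by apply: (in_graded_span_homog hy); lia.
by move=> k z hk hz; apply: (kill (- k)) => //; lia.
Qed.
End LocallyGenerated.

Lemma local_homP (K : numFieldType) (V : lmodType K) (G : LieSA V) v :
  local_hom G v <-> exists2 k, is_local_deg k & deg G k v.
Proof.
split=> [[h|[h|h]]|[k]]; [exists (-1) | exists 0 | exists 1 | ] => //.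
by rewrite /is_local_deg => /orP[/orP[]|] /eqP ->; rewrite /local_hom; tauto.
Qed.

Lemma map0_of_lin (K : numFieldType) (W V : lmodType K) (f : W -> V) :
  f (1 *: 0 + 0) = 1 *: f 0 + f 0 -> f 0 = 0.
Proof. by rewrite !scale1r addr0 => h; apply/(addrI (f 0)); rewrite addr0 -h. Qed.

Section GraphExtension.
Variables (K : numFieldType) (W V : lmodType K) (H : LieSA W) (G : LieSA V) (f : W -> V).
Hypothesis hf : local_iso H G f.
Hypothesis hH : locally_generated H.
Hypothesis hG : locally_generated G.

Let f_deg k x : is_local_deg k -> deg H k x -> deg G k (f x).
Proof. by move=> hk; case: hf => h _; exact: h. Qed.

Let f_lin k a x y : is_local_deg k -> deg H k x -> deg H k y ->
  f (a *: x + y) = a *: f x + f y.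
Proof. by move=> hk; case: hf => _ [h _]; exact: h. Qed.

Let f_surj k y : is_local_deg k -> deg G k y -> exists2 x, deg H k x & f x = y.
Proof. by move=> hk; case: hf => _ [_ [_ [h _]]]; exact: h. Qed.

Let f_br i j x y : is_local_deg i -> is_local_deg j -> is_local_deg (i + j) ->
  deg H i x -> deg H j y -> f (br H x y) = br G (f x) (f y).
Proof. by move=> hi hj hij; case: hf => _ [_ [_ [_ h]]]; exact: h. Qed.

Let f0 : f 0 = 0.
Proof. by apply: map0_of_lin; apply: (@f_lin 0) => //; exact: deg0. Qed.

Definition graph k (p : W * V) := deg H k p.1 /\ p.2 = f p.1.

Let P := prodLieSA H G.

Let graph_deg k p : is_local_deg k -> graph k p -> deg P k p.
Proof. by move=> hk [hp ep]; split; rewrite /= ?ep; [|exact: f_deg]. Qed.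

Let graph0 k : graph k 0.
Proof. by split; [exact: deg0 | rewrite /= f0]. Qed.

Let graph_lin k a p q : is_local_deg k -> graph k p -> graph k q -> graph k (a *: p + q).
Proof.
move=> hk [hp ep] [hq eq]; split; first exact: degD.
by rewrite /= (f_lin a hk hp hq) ep eq.
Qed.

Let graph_br i j p q : is_local_deg i -> is_local_deg j -> is_local_deg (i + j) ->
  graph i p -> graph j q -> graph (i + j) (br P p q).
Proof.
move=> hi hj hij [hp ep] [hq eq]; split; first exact: br_deg.
by rewrite /= (f_br hi hj hij hp hq) ep eq.
Qed.

Local Notation graph_alg := (generated P (loc_hom graph)).

Let graph_alg_local x : local_hom H x -> graph_alg (x, f x).
Proof.
by move=> hx; apply: gen_base; case: hx => [h|[h|h]]; [left | right; left | right; right].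
Qed.

Let graph_alg_sub p q : graph_alg p -> graph_alg q -> graph_alg (p - q).
Proof. by move=> hp hq; have := gen_lin (-1) hq hp; rewrite scaleN1r addrC. Qed.

Lemma graph_alg_fst w : exists v, graph_alg (w, v).
Proof.
elim: (hH w) => [x hx | | a x1 x2 _ [v1 h1] _ [v2 h2] | x1 x2 _ [v1 h1] _ [v2 h2]].
- by exists (f x); exact: graph_alg_local.
- by exists 0; exact: gen_zero.
- by exists (a *: v1 + v2); exact: (gen_lin a h1 h2).
- by exists (br G v1 v2); exact: (gen_br h1 h2).
Qed.

Lemma graph_alg_snd v : exists w, graph_alg (w, v).
Proof.
elim: (hG v) => [y hy | | a x1 x2 _ [w1 h1] _ [w2 h2] | x1 x2 _ [w1 h1] _ [w2 h2]].
- have /local_homP [k hk hyk] := hy; have [x hx <-] := f_surj hk hyk.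
  by exists x; apply/graph_alg_local/local_homP; exists k.
- by exists 0; exact: gen_zero.
- by exists (a *: w1 + w2); exact: (gen_lin a h1 h2).
- by exists (br H w1 w2); exact: (gen_br h1 h2).
Qed.

Lemma graph_kernel_br y v : graph_alg (0, y) -> graph_alg (0, br G v y).
Proof.
move=> hy; have [x hx] := graph_alg_snd v.
by have := gen_br hx hy; rewrite /= /prod_br /= br0r.
Qed.

Lemma graph_kernel_local y k : graph_alg (0, y) -> deg G k y -> is_local_deg k -> y = 0.
Proof.
move=> hy hyk hk.
have [_ /= ->] := generated_local graph_deg graph_br hk (graph0 k)
  (fun a p q => @graph_lin k a p q hk) hy (conj (deg0 H k) hyk).
exact: f0.
Qed.

Let graph_alg_add p q : graph_alg p -> graph_alg q -> graph_alg (p + q).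
Proof. by move=> hp hq; have := gen_lin 1 hp hq; rewrite scale1r. Qed.

Hypothesis ht : mn_transitive G (-2) 2.

Lemma graph_kernel_homog y d : graph_alg (0, y) -> deg G d y -> y = 0.
Proof.
have [n] := ubnP (absz d); elim: n y d => // n IH y d hn hy hyd.
have [hl|hnl] := boolP (is_local_deg d); first exact: graph_kernel_local hy hyd hl.
apply: (homog_eq0_of_transitive hG ht hyd hnl) => z hz.
apply: (IH _ (sdeg (d < 0) + d)); [|exact: graph_kernel_br | exact: br_deg].
by move: hnl hn; rewrite /is_local_deg /sdeg; case: ltP; lia.
Qed.

Lemma graph_alg_graded p : graph_alg p -> exists s : seq (int * (W * V)),
  graded_seq H [seq (q.1, q.2.1) | q <- s] /\ p = \sum_(q <- s) q.2 /\
  forall k, graph_alg (hcomp s k) /\ deg G k (hcomp [seq (q.1, q.2.2) | q <- s] k).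
Proof.
case/(generated_graded graph_deg graph_br) => s [hs ps]; exists s; split.
  by move=> _ /mapP[q /hs [[hq _] _] ->].
split=> // k; have gs : graded_seq P s by move=> q /hs [].
split; last by have [] := hcomp_deg k gs; rewrite hcomp_pair.
rewrite /hcomp big_seq_cond.
by apply: big_ind => [||q /andP[/hs [] //]]; [exact: gen_zero | exact: graph_alg_add].
Qed.

Lemma graph_kernel_eq0 y : graph_alg (0, y) -> y = 0.
Proof.
move=> /graph_alg_graded [s [gs1 [ps hs]]].
have -> : y = \sum_(q <- [seq (q.1, q.2.2) | q <- s]) q.2.
  by rewrite big_map -snd_sum -ps.
apply: (hcomp_ind (S := eq^~ 0)) => [//|_ _ -> ->|k]; first by rewrite addr0.
have [gk dk] := hs k; move: gk; rewrite hcomp_pair (hcomp_eq0 gs1) => [gk|].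
  exact: graph_kernel_homog gk dk.
by rewrite big_map -fst_sum -ps.
Qed.

Lemma graph_alg_functional w v1 v2 : graph_alg (w, v1) -> graph_alg (w, v2) -> v1 = v2.
Proof.
move=> h1 h2; apply/eqP; rewrite -subr_eq0; apply/eqP/graph_kernel_eq0.
by have := graph_alg_sub h1 h2; rewrite [(w, v1) - _]surjective_pairing /= subrr.
Qed.

Lemma graph_alg_homog x v k : graph_alg (x, v) -> deg H k x -> deg G k v.
Proof.
move=> /[dup] hxv /graph_alg_graded [s [gs1 [ps hs]]] hx; have [gk dk] := hs k.
have := hcomp_homog gs1 hx _ k; rewrite eqxx => /(_ _) e1.
move: gk; rewrite hcomp_pair e1 => [gk|]; first by rewrite (graph_alg_functional hxv gk).
by rewrite big_map -fst_sum -ps.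
Qed.

Lemma local_iso_extends :
  exists g : W -> V, lie_morphism H G g /\ (forall x, local_hom H x -> g x = f x).
Proof.
pose g w := epsilon (inhabits 0) (fun v => graph_alg (w, v)).
have gP w : graph_alg (w, g w) := epsilon_spec (inhabits 0) _ (graph_alg_fst w).
exists g; split; [split; [|split]|].
- by move=> a x y; apply: graph_alg_functional (gP _) (gen_lin a (gP x) (gP y)).
- by move=> k x; apply: graph_alg_homog (gP x).
- by move=> x y; apply: graph_alg_functional (gP _) (gen_br (gP x) (gP y)).
- by move=> x hx; apply: graph_alg_functional (gP x) (graph_alg_local hx).
Qed.
End GraphExtension.

Lemma minimal_of_transitive (K : numFieldType) (V : lmodType K) (G : LieSA V) :
  locally_generated G -> mn_transitive G (-2) 2 -> minimal G.
Proof. by move=> hG ht; split=> // W H hH f hf; exact: (local_iso_extends hf hH hG ht). Qed.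

Section QuotientModule.
Variables (K : numFieldType) (V : lmodType K) (I : V -> Prop).
Hypothesis I0 : I 0.
Hypothesis Ilin : forall a x y, I x -> I y -> I (a *: x + y).
Local Open Scope quotient_scope.

Lemma sub_closedD x y : I x -> I y -> I (x + y).
Proof. by move=> hx hy; have := Ilin 1 hx hy; rewrite scale1r. Qed.

Lemma sub_closedZ a x : I x -> I (a *: x).
Proof. by move=> hx; have := Ilin a hx I0; rewrite addr0. Qed.

Lemma sub_closedN x : I x -> I (- x).
Proof. by rewrite -scaleN1r; exact: sub_closedZ. Qed.

Definition congr_mod (x y : V) : bool :=
  if excluded_middle_informative (I (x - y)) then true else false.

Lemma congr_modP x y : reflect (I (x - y)) (congr_mod x y).
Proof. by rewrite /congr_mod; case: excluded_middle_informative => h; constructor. Qed.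

Lemma congr_mod_refl : reflexive congr_mod.
Proof. by move=> x; apply/congr_modP; rewrite subrr. Qed.

Lemma congr_mod_sym : symmetric congr_mod.
Proof. by move=> x y; apply/congr_modP/congr_modP => /sub_closedN; rewrite opprB. Qed.

Lemma congr_mod_trans : transitive congr_mod.
Proof.
move=> y x z /congr_modP h1 /congr_modP h2; apply/congr_modP.
by have := sub_closedD h1 h2; rewrite addrA subrK.
Qed.

Canonical congr_mod_rel := EquivRel congr_mod congr_mod_refl congr_mod_sym congr_mod_trans.

Definition quotmod := {eq_quot congr_mod}.
Definition qproj (x : V) : quotmod := \pi x.

Lemma qprojP x y : qproj x = qproj y <-> I (x - y).
Proof. by split => [/eqquotP/congr_modP | h]; last exact/eqquotP/congr_modP. Qed.

Lemma qprojK (q : quotmod) : qproj (repr q) = q.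
Proof. exact: reprK. Qed.

Lemma repr_qproj x : I (repr (qproj x) - x).
Proof. by apply/qprojP; rewrite qprojK. Qed.

Let addq (q1 q2 : quotmod) := qproj (repr q1 + repr q2).
Let oppq (q : quotmod) := qproj (- repr q).
Let scaleq (a : K) (q : quotmod) := qproj (a *: repr q).

Let addq_proj x y : addq (qproj x) (qproj y) = qproj (x + y).
Proof.
by apply/qprojP; have := sub_closedD (repr_qproj x) (repr_qproj y); rewrite opprD addrACA.
Qed.

Let oppq_proj x : oppq (qproj x) = qproj (- x).
Proof. by apply/qprojP; have := sub_closedN (repr_qproj x); rewrite opprB opprK addrC. Qed.

Let scaleq_proj a x : scaleq a (qproj x) = qproj (a *: x).
Proof. by apply/qprojP; have := sub_closedZ a (repr_qproj x); rewrite scalerBr. Qed.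

Let addqA : associative addq.
Proof. by move=> q1 q2 q3; rewrite -(qprojK q1) -(qprojK q2) -(qprojK q3) !addq_proj addrA. Qed.

Let addqC : commutative addq.
Proof. by move=> q1 q2; rewrite -(qprojK q1) -(qprojK q2) !addq_proj addrC. Qed.

Let add0q : left_id (qproj 0) addq.
Proof. by move=> q; rewrite -(qprojK q) addq_proj add0r. Qed.

Let addNq : left_inverse (qproj 0) oppq addq.
Proof. by move=> q; rewrite -(qprojK q) oppq_proj addq_proj addNr. Qed.

HB.instance Definition _ := Choice.copy quotmod {eq_quot congr_mod}.
HB.instance Definition _ := GRing.isZmodule.Build quotmod addqA addqC add0q addNq.

Lemma qprojD x y : qproj (x + y) = qproj x + qproj y.
Proof. by symmetry; exact: addq_proj. Qed.

Let scaleqA a b q : scaleq a (scaleq b q) = scaleq (a * b) q.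
Proof. by rewrite -(qprojK q) !scaleq_proj scalerA. Qed.

Let scale1q : left_id 1 scaleq.
Proof. by move=> q; rewrite -(qprojK q) scaleq_proj scale1r. Qed.

Let scaleqDr : right_distributive scaleq +%R.
Proof.
move=> a q1 q2; rewrite -(qprojK q1) -(qprojK q2).
by rewrite -qprojD !scaleq_proj -qprojD scalerDr.
Qed.

Let scaleqDl q : {morph scaleq^~ q : a b / a + b}.
Proof. by move=> a b; rewrite -(qprojK q) /= !scaleq_proj -qprojD scalerDl. Qed.

HB.instance Definition _ :=
  GRing.Zmodule_isLmodule.Build K quotmod scaleqA scale1q scaleqDr scaleqDl.

Lemma qproj0 : qproj 0 = 0.
Proof. by []. Qed.

Lemma qprojZ a x : qproj (a *: x) = a *: qproj x.
Proof. by symmetry; exact: scaleq_proj. Qed.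

Lemma qproj_lin a x y : qproj (a *: x + y) = a *: qproj x + qproj y.
Proof. by rewrite qprojD qprojZ. Qed.

Lemma qprojN x : qproj (- x) = - qproj x.
Proof. by symmetry; exact: oppq_proj. Qed.

Lemma qproj_sum (J : Type) (r : seq J) (P : pred J) (F : J -> V) :
  qproj (\sum_(i <- r | P i) F i) = \sum_(i <- r | P i) qproj (F i).
Proof. by apply: (big_morph qproj); [exact: qprojD | exact: qproj0]. Qed.
End QuotientModule.

Section QuotientLieSA.
Variables (K : numFieldType) (V : lmodType K) (G : LieSA V) (I : V -> Prop).
Hypothesis I0 : I 0.
Hypothesis Ilin : forall a x y, I x -> I y -> I (a *: x + y).
Hypothesis ideal_l : forall v y, I y -> I (br G v y).
Hypothesis ideal_graded : forall y, I y -> exists t : seq (int * V),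
  (forall p, p \in t -> I p.2 /\ deg G p.1 p.2) /\ y = \sum_(p <- t) p.2.
Hypothesis ideal_local : forall y k, I y -> deg G k y -> is_local_deg k -> y = 0.
Hypothesis hG : locally_generated G.

Local Notation quot := (quotmod I0 Ilin).
Local Notation qproj := (qproj I0 Ilin).

Let sub_closed_sum (J : Type) (r : seq J) (P : pred J) (F : J -> V) :
  (forall i, P i -> I (F i)) -> I (\sum_(i <- r | P i) F i).
Proof. by move=> hF; apply: big_ind => //; exact: sub_closedD. Qed.

Lemma ideal_r v y : I y -> I (br G y v).
Proof.
case/ideal_graded=> t [ht ->]; have [l [c [hc ->]]] := deg_span G v.
rewrite br_suml big_seq; apply: sub_closed_sum => p /ht [Ip dp].
rewrite br_sumr; apply: sub_closed_sum => k _; rewrite (br_anti dp (hc k)).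
by apply/(sub_closedN I0 Ilin)/(sub_closedZ I0 Ilin)/ideal_l.
Qed.

Lemma ideal_hcomp y u : I y -> graded_seq G u -> y = \sum_(p <- u) p.2 ->
  forall k, I (hcomp u k).
Proof.
move=> /ideal_graded [t [ht yt]] gu yu k.
pose w := u ++ [seq (p.1, - p.2) | p <- t].
have gw : graded_seq G w.
  by move=> p; rewrite mem_cat => /orP[/gu //|/mapP[q /ht [_ hq] ->]]; exact: degN.
have w0 : \sum_(p <- w) p.2 = 0 by rewrite big_cat big_map sumrN -yu -yt; exact: subrr.
move: (hcomp_eq0 gw w0 k) => /eqP; rewrite /hcomp big_cat big_map sumrN subr_eq0 => /eqP ->.
by rewrite big_seq_cond; apply: sub_closed_sum => p /andP[/ht[]].
Qed.

Lemma ideal_local_eq x x' k k' : is_local_deg k -> is_local_deg k' ->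
  deg G k x -> deg G k' x' -> I (x - x') -> x = x'.
Proof.
move=> hk hk' hx hx' hI; pose u := [:: (k, x); (k', - x')].
have gu : graded_seq G u.
  by move=> p; rewrite !inE => /orP[] /eqP -> //; exact: degN.
have u0 j : is_local_deg j -> hcomp u j = 0.
  move=> hj; apply: ideal_local _ (hcomp_deg j gu) hj.
  by apply: (ideal_hcomp hI gu); rewrite big_cons big_seq1.
have := u0 _ hk; have := u0 _ hk'; rewrite /hcomp !big_cons big_nil /=.
case: (eqVneq k k') => [<- | ne]; rewrite !eqxx big_nil.
  by rewrite !addr0 => /eqP; rewrite subr_eq0 => /eqP.
by rewrite !addr0 => /eqP; rewrite oppr_eq0 => /eqP -> ->.
Qed.

Definition qbr (a b : quot) : quot := qproj (br G (repr a) (repr b)).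
Definition qdeg k (q : quot) := exists2 v, deg G k v & q = qproj v.

Lemma qbr_proj x y : qbr (qproj x) (qproj y) = qproj (br G x y).
Proof.
apply/qprojP; have := sub_closedD Ilin (ideal_r (repr (qproj y)) (repr_qproj I0 Ilin x))
  (ideal_l x (repr_qproj I0 Ilin y)).
by rewrite brBl brBr addrA subrK.
Qed.

Lemma qdeg_span (q : quot) : exists (s : seq int) (c : int -> quot),
  (forall k, qdeg k (c k)) /\ q = \sum_(k <- s) c k.
Proof.
have [s [c [hc hq]]] := deg_span G (repr q).
exists s, (qproj \o c); split=> [k|]; first by exists (c k).
by rewrite -qproj_sum -hq qprojK.
Qed.

Lemma qdeg_indep (s : seq int) (c : int -> quot) : uniq s ->
  (forall k, k \in s -> qdeg k (c k)) -> \sum_(k <- s) c k = 0 ->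
  forall k, k \in s -> c k = 0.
Proof.
move=> us hc s0.
pose v k := epsilon (inhabits 0) (fun v => deg G k v /\ c k = qproj v).
have hv k : k \in s -> deg G k (v k) /\ c k = qproj (v k).
  move=> ks; apply: (epsilon_spec (inhabits 0) (fun w => deg G k w /\ c k = qproj w)).
  by have [w hw ->] := hc k ks; exists w.
have Iv : I (\sum_(k <- s) v k).
  rewrite -[X in I X]subr0; apply/qprojP; rewrite qproj_sum qproj0 -[RHS]s0.
  by rewrite big_seq [RHS]big_seq; apply: eq_bigr => k /hv [].
move=> k ks; rewrite (hv k ks).2 -(qproj0 I0 Ilin); apply/qprojP; rewrite subr0.
have gs : graded_seq G [seq (j, v j) | j <- s] by move=> _ /mapP[j /hv [] ? _ ->].
have e : \sum_(k <- s) v k = \sum_(p <- [seq (j, v j) | j <- s]) p.2 by rewrite big_map.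
by have := ideal_hcomp Iv gs e k; rewrite /hcomp big_map /= sum_pred1_uniq.
Qed.

Definition quotLieSA : LieSA quot.
Proof.
refine (@Build_LieSA _ _ qdeg _ _ qdeg_span qdeg_indep qbr _ _ _ _ _).
- by move=> k; exists 0; [exact: deg0 | rewrite qproj0].
- move=> k a _ _ [v hv ->] [w hw ->].
  by exists (a *: v + w); [exact: degD | rewrite qproj_lin].
- move=> a x y z; rewrite -(qprojK x) -(qprojK y) -(qprojK z) -qproj_lin.
  by rewrite !qbr_proj brDl qproj_lin.
- move=> a x y z; rewrite -(qprojK x) -(qprojK y) -(qprojK z) -qproj_lin.
  by rewrite !qbr_proj brDr qproj_lin.
- by move=> i j _ _ [v hv ->] [w hw ->]; exists (br G v w); [exact: br_deg | exact: qbr_proj].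
- move=> i j _ _ [v hv ->] [w hw ->].
  by rewrite !qbr_proj (br_anti hv hw) qprojN qprojZ.
- move=> i j _ _ z [v hv ->] [w hw ->]; rewrite -(qprojK z).
  by rewrite !qbr_proj (br_jacobi _ hv hw) qprojD qprojZ.
Defined.

(* The inverse of the projection on the local part; off the local part it is junk. *)
Definition qlift (q : quot) : V :=
  epsilon (inhabits 0) (fun v => local_hom G v /\ q = qproj v).

Lemma qlift_proj v k : is_local_deg k -> deg G k v -> qlift (qproj v) = v.
Proof.
move=> hk hv; have hl : local_hom G v by apply/local_homP; exists k.
have [/local_homP [k' hk' hv'] /qprojP hI] :=
  epsilon_spec (inhabits 0) (fun v' => local_hom G v' /\ qproj v = qproj v')
    (ex_intro _ v (conj hl erefl)).
by apply/esym/(ideal_local_eq hk hk' hv hv').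
Qed.

Lemma qproj_local_hom v : local_hom G v -> local_hom quotLieSA (qproj v).
Proof.
by case/local_homP=> k hk hv; apply/local_homP; exists k => //; exists v.
Qed.

Lemma qlift_local_iso : local_iso quotLieSA G qlift.
Proof.
split; [|split; [|split; [|split]]].
- by move=> k hk _ [v hv ->]; rewrite (qlift_proj hk hv).
- move=> k hk a _ _ [v hv ->] [w hw ->].
  by rewrite -qproj_lin (qlift_proj hk (degD a hv hw)) (qlift_proj hk hv) (qlift_proj hk hw).
- by move=> k hk _ _ [v hv ->] [w hw ->]; rewrite (qlift_proj hk hv) (qlift_proj hk hw) => ->.
- by move=> k hk y hy; exists (qproj y); [exists y | exact: qlift_proj hk hy].
- move=> i j hi hj hij _ _ [v hv ->] [w hw ->].
  by rewrite /= qbr_proj (qlift_proj hij (br_deg hv hw)) (qlift_proj hi hv) (qlift_proj hj hw).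
Qed.

Lemma quot_locally_generated : locally_generated quotLieSA.
Proof.
move=> q; rewrite -(qprojK q).
elim: (hG (repr q)) => [x hx | | a x y _ hx _ hy | x y _ hx _ hy].
- exact/gen_base/qproj_local_hom.
- by rewrite qproj0; exact: gen_zero.
- by rewrite qproj_lin; exact: gen_lin.
- by rewrite -qbr_proj; exact: (@gen_br _ _ quotLieSA).
Qed.

(* Minimality extends [qlift] to a left inverse of the projection. *)
Lemma minimal_ideal_eq0 : minimal G -> forall x, I x -> x = 0.
Proof.
case=> _ /(_ _ quotLieSA quot_locally_generated qlift qlift_local_iso).
case=> g [[glin [_ gbr]] gloc].
have g0 : g 0 = 0 by apply: map0_of_lin; exact: glin.
have gK v : g (qproj v) = v.
  elim: (hG v) => [x hx | | a x y _ hx _ hy | x y _ hx _ hy].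
  - have /local_homP [k hk hxk] := hx.
    by rewrite gloc ?(qlift_proj hk hxk) //; exact: qproj_local_hom.
  - by rewrite qproj0 g0.
  - by rewrite qproj_lin glin hx hy.
  - by rewrite -qbr_proj gbr hx hy.
move=> x hx; rewrite -(gK x) -g0 -(qproj0 I0 Ilin); congr g.
by apply/qprojP; rewrite subr0.
Qed.
End QuotientLieSA.

Section InertIdeal.
Variables (K : numFieldType) (V : lmodType K) (G : LieSA V) (s : bool).
Hypothesis hG : locally_generated G.

(* For [s = false] degrees are mirrored, so that one construction handles both
   positive and negative transitivity. *)
Definition sgn (d : int) : int := if s then d else - d.

Lemma sgnD x y : sgn (x + y) = sgn x + sgn y.
Proof. by rewrite /sgn; case: s; rewrite ?opprD. Qed.

Lemma sgnK x : sgn (sgn x) = x.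
Proof. by rewrite /sgn; case: s; rewrite ?opprK. Qed.

(* [inert_ideal] is the ideal generated by the y of degree >= 2 with [G_-, y] = 0;
   brackets with G_- keep it stable (inert_br_neg), so only brackets with G_j,
   j >= 0, are needed to generate it. *)
Inductive inert : int -> V -> Prop :=
  | inert_base d y : deg G d y -> 2 <= sgn d ->
      (forall k z, 1 <= k -> deg G (sgn (- k)) z -> br G z y = 0) -> inert d y
  | inert_br d y j u : inert d y -> deg G j u -> 0 <= sgn j -> inert (j + d) (br G u y).

Definition inert_ideal := span (fun y => exists d, inert d y).

Lemma inert_deg d y : inert d y -> deg G d y /\ 2 <= sgn d.
Proof.
elim=> [// | d0 y0 j u _ [hy hd] hu hj].
by split; [exact: br_deg | rewrite sgnD; lia].
Qed.

Lemma inertZ a d y : inert d y -> inert d (a *: y).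
Proof.
elim=> [d0 y0 hy hd hk | d0 y0 j u _ IH hu hj].
  apply: inert_base hd _; first exact: degZ.
  by move=> k z hk' hz; rewrite brZr (hk k z hk' hz) scaler0.
by rewrite -brZr; exact: inert_br.
Qed.

Lemma inert_ideal_decomp y : inert_ideal y -> exists t : seq (int * V),
  (forall p, p \in t -> inert p.1 p.2) /\ y = \sum_(p <- t) p.2.
Proof.
elim=> [| x [d hx] | a x y' _ [t1 [h1 ->]] _ [t2 [h2 ->]]].
- by exists [::]; rewrite big_nil.
- by exists [:: (d, x)]; rewrite big_seq1; split => // p; rewrite mem_seq1 => /eqP ->.
- exists ([seq (p.1, a *: p.2) | p <- t1] ++ t2); split.
    by move=> p; rewrite mem_cat => /orP[/mapP[q /h1 hq ->]|/h2] //; exact: inertZ.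
  by rewrite big_cat big_map /= scaler_sumr.
Qed.

Lemma inert_ideal_graded y : inert_ideal y -> exists t : seq (int * V),
  (forall p, p \in t -> inert_ideal p.2 /\ deg G p.1 p.2) /\ y = \sum_(p <- t) p.2.
Proof.
case/inert_ideal_decomp=> t [ht ->]; exists t; split => // p /ht hp.
by split; [apply: span_gen; exists p.1 | exact: (inert_deg hp).1].
Qed.

Lemma inert_ideal_local y k : inert_ideal y -> deg G k y -> is_local_deg k -> y = 0.
Proof.
case/inert_ideal_decomp=> t [ht yt] hk hl.
have gt : graded_seq G t by move=> p /ht /inert_deg [].
have := hcomp_homog gt hk yt k; rewrite eqxx => <-.
rewrite /hcomp big1_seq // => p /andP[/eqP ep /ht /inert_deg [_]].
by move: hl; rewrite ep /sgn /is_local_deg; case: s; lia.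
Qed.

Lemma inert_ideal_br_nonneg j u y : deg G j u -> 0 <= sgn j ->
  inert_ideal y -> inert_ideal (br G u y).
Proof.
move=> hu hj; elim=> [| x [d hx] | a x y' _ h1 _ h2].
- by rewrite br0r; exact: span0.
- by apply: span_gen; exists (j + d); exact: inert_br.
- by rewrite brDr; exact: span_lin.
Qed.

Lemma inert_br_neg d y j u : inert d y -> deg G j u -> sgn j <= -1 ->
  inert_ideal (br G u y).
Proof.
move=> hy; elim: hy j u => [d0 y0 h1 h2 hk | d0 y0 j' u' hy0 IH hu' hj'] j u hu hj.
  rewrite (hk (- sgn j)) ?opprK ?sgnK //; [exact: span0 | lia].
rewrite (br_jacobi _ hu hu'); apply: spanD; last first.
  by apply/spanZ/(inert_ideal_br_nonneg hu' hj')/(IH _ _ hu hj).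
have [hp|hn] : 0 <= sgn (j + j') \/ sgn (j + j') <= -1 by lia.
  by apply: span_gen; exists (j + j' + d0); apply: inert_br => //; exact: br_deg.
exact: IH (br_deg hu hu') hn.
Qed.

Lemma inert_ideal_l v y : inert_ideal y -> inert_ideal (br G v y).
Proof.
move=> hy; have [l [c [hc ->]]] := deg_span G v.
rewrite br_suml; apply: span_sum => k _.
have [hp|hn] : 0 <= sgn k \/ sgn k <= -1 by lia.
  exact: inert_ideal_br_nonneg (hc k) hp hy.
elim: hy => [| x [d hx] | a x y' _ h1 _ h2].
- by rewrite br0r; exact: span0.
- exact: inert_br_neg hx (hc k) hn.
- by rewrite brDr; exact: span_lin.
Qed.

Lemma inert_ideal_of x : in_graded_span G (fun k => 2 <= sgn k) x ->
  (forall k z, 1 <= k -> deg G (sgn (- k)) z -> br G z x = 0) -> inert_ideal x.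
Proof.
case=> l [c [hl [hc ->]]] hkill; rewrite -(big_map (fun k => (k, c k)) xpredT snd).
apply: hcomp_ind => [|*|D]; [exact: span0 | exact: spanD |].
rewrite /hcomp big_map /=; have [hD|hD] := boolP (2 <= sgn D); last first.
  by rewrite big1_seq => [|k /andP[/eqP ek /hl]]; [exact: span0 | rewrite ek (negPf hD)].
apply: span_gen; exists D; apply: inert_base => //.
  by apply: deg_sum => k /eqP <-.
move=> k z hk hz; pose t := [seq (sgn (- k) + j, br G z (c j)) | j <- l].
have gt : graded_seq G t by move=> _ /mapP[j _ ->]; exact: br_deg.
have t0 : \sum_(p <- t) p.2 = 0 by rewrite big_map -br_sumr (hkill k z hk hz).
have := hcomp_eq0 gt t0 (sgn (- k) + D); rewrite /hcomp big_map /= -br_sumr.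
by rewrite (eq_bigl (eq_op^~ D)) // => j; rewrite (inj_eq (addrI _)).
Qed.

Lemma minimal_inert_eq0 : minimal G ->
  forall x, in_graded_span G (fun k => 2 <= sgn k) x ->
  (forall k z, 1 <= k -> deg G (sgn (- k)) z -> br G z x = 0) -> x = 0.
Proof.
move=> hmin x hx hk.
apply: (minimal_ideal_eq0 (I := inert_ideal)) (inert_ideal_of hx hk) => //.
- exact: span0.
- exact: span_lin.
- exact: inert_ideal_l.
- exact: inert_ideal_graded.
- exact: inert_ideal_local.
Qed.
End InertIdeal.

Lemma transitive_of_minimal (K : numFieldType) (V : lmodType K) (G : LieSA V) :
  locally_generated G -> minimal G -> mn_transitive G (-2) 2.
Proof.
move=> hG hmin; split=> x hx hk.
  apply: (minimal_inert_eq0 (s := false) hG hmin).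
    by case: hx => l [c [hl hc]]; exists l, c; split => // k /hl; rewrite /sgn; lia.
  by move=> k z; rewrite /sgn opprK; exact: hk.
exact: (minimal_inert_eq0 (s := true) hG hmin).
Qed.

Lemma mn_transitive_mono (K : numFieldType) (V : lmodType K) (G : LieSA V) m n m' n' :
  m' <= m -> n <= n' -> mn_transitive G m n -> mn_transitive G m' n'.
Proof.
move=> hm hn [tp tn]; split=> x [l [c [hl hc]]] hk.
  by apply: tp hk; exists l, c; split => // k /hl; lia.
by apply: tn hk; exists l, c; split => // k /hl; lia.
Qed.

Theorem corollary2p14 :
  (forall (K : numFieldType) (V : lmodType K) (G : LieSA V),
      locally_generated G -> (minimal G <-> mn_transitive G (-2) 2)) /\
  (forall (K : numFieldType) (V : lmodType K) (G : LieSA V),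
      locally_generated G -> mn_transitive G 0 0 -> minimal G).
Proof.
split=> K V G hG; first by split; [exact: transitive_of_minimal | exact: minimal_of_transitive].
by move=> h00; apply: minimal_of_transitive => //; exact: mn_transitive_mono h00.
Qed.
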